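(* Let $\mathcal H=\{h_1,\dots,h_k\}$ be an admissible set of $k\ge 2$ distinct integers with $0\in\mathcal H$, let $0\le \ell_1,\ell_2\le k$, and let $p<R$ be prime. Then \[ U_1(p)=-\sum_{\substack{(r,A)=1\\(r,p)=1}}\frac{z^*_{r,p,\ell_1}y^*_{r,\ell_2}}{f_1^*(r)}-\frac{\nu_p^*}{p-1}\sum_{\substack{(r,A)=1\\(r,p)=1}}\frac{z^*_{r,p,\ell_1}z^*_{r,p,\ell_2}}{f_1^*(r)}, \] and \[ U_3(p)=\sum_{\substack{(r,A)=1\\(r,p)=1}}\frac{z^*_{r,p,\ell_1}z^*_{r,p,\ell_2}}{f_1^*(r)}. \]
   Context: $P(n;\mathcal H)=\prod_{h\in\mathcal H}(n+h)$. For squarefree $d$: - $\nu_d$ is the number of residues $a$ mod $d$ with $P(a;\mathcal H)\equiv0\pmod d$; - $\nu^*_d$ is the number of such $a$ that additionally satisfy $(a,d)=1$ (so $\nu^*_d=\prod_{p\mid d}(\nu_p-1)$). The set $\mathcal H$ is admissible if $\nu_p<p$ for all $p$. Let $\mathfrak S(\mathcal H)=\prod_p(1-\nu_p/p)(1-1/p)^{-k}$. For squarefree $d$, let $f(d)=d/\nu_d$ and $f_1(d)=\prod_{p\mid d}(p-\nu_p)/\nu_p$. For $R>1$, \[ \lambda_{d,\ell}=\mu(d)\frac{f(d)}{f_1(d)}\frac{\mathfrak S(\mathcal H)}{\ell!}\sum_{r<R/d,(r,d)=1}\frac{\mu^2(r)}{f_1(r)}(\log\tfrac R{rd})^\ell\quad\text{for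 } d<R, \] and $\lambda_{d,\ell}=0$ for $d\ge R$. Let $A$ be the product of the primes $p$ with $\nu^*_p=0$. For squarefree $r$ with $(r,A)=1$, let $f^*(r)=\phi(r)/\nu^*_r$ and $f_1^*(r)=\prod_{p\mid r}\frac{p-\nu_p}{\nu_p-1}$. Define \[ y^*_{r,\ell}=\mu(r)f_1^*(r)\sum_{(d,A)=1}\frac{\lambda_{dr,\ell}}{f^*(dr)}\quad\text{if } (r,A)=1,\ r<R, \] and $0$ otherwise. Define \[ z^*_{r,p,\ell}=\mu(pr)f_1^*(r)\sum_{(d,A)=1}\frac{\lambda_{drp,\ell}}{f^*(dr)}\quad\text{if } r<R/p,\ (r,A)=1, \] and $0$ otherwise. Finally, \[ U_1(p)=\sum_{d,e:\ p\mid d,\ p\nmid e}\frac{\lambda_{d,\ell_1}\lambda_{e,\ell_2}\nu^*_{[d,e]/p}}{\phi([d,e]/p)},\qquad U_3(p)=\sum_{d,e:\ p\mid d,\ p\mid e}\frac{\lambda_{d,\ell_1}\lambda_{e,\ell_2}\nu^*_{[d,e]/p}}{\phi([d,e]/p)}. \] *)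

From HB Require Import structures.
From mathcomp Require Import all_boot all_order all_algebra.
From mathcomp Require Import all_classical all_reals all_analysis.
Set Implicit Arguments. Unset Strict Implicit. Unset Printing Implicit Defensive.
Import Order.TTheory GRing.Theory Num.Theory.
Import numFieldNormedType.Exports.
Local Open Scope ring_scope.

Definition Ppoly (H : seq int) (n : int) : int := \prod_(h <- H) (n + h).

Definition nu (H : seq int) (d : nat) : nat :=
  count (fun a : nat => (d%:Z %| Ppoly H a%:Z)%Z) (iota 0 d).

Definition nu_star (H : seq int) (d : nat) : nat :=
  count (fun a : nat => (d%:Z %| Ppoly H a%:Z)%Z && coprime a d) (iota 0 d).

Definition admissible (H : seq int) : Prop :=
  forall p : nat, prime p -> (nu H p < p)%N.

Definition squarefree (n : nat) : bool :=
  (0 < n)%N && all (fun p => logn p n == 1%N) (primes n).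

Definition mu {R : pzRingType} (n : nat) : R :=
  if squarefree n then (-1) ^+ size (primes n) else 0.

(* (r, A) = 1, where A is the product of the primes q with nu*_q = 0 :
   no prime divisor q of r has nu*_q = 0 *)
Definition coprimeA (H : seq int) (r : nat) : bool :=
  all (fun q => nu_star H q != 0%N) (primes r).

Section Weights.
Variables (R : realType) (H : seq int) (RR : R).

Let k : nat := size H.

Definition sing_series : R :=
  limn (fun N : nat => (\prod_(p < N | prime p)
          ((1 - (nu H p)%:R / p%:R) * (1 - 1 / p%:R) ^- k) : R)).

Definition f (d : nat) : R := d%:R / (nu H d)%:R.
Definition f1 (d : nat) : R :=
  \prod_(q <- primes d) ((q%:R - (nu H q)%:R) / (nu H q)%:R).
Definition fstar (r : nat) : R := (totient r)%:R / (nu_star H r)%:R.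
Definition f1star (r : nat) : R :=
  \prod_(q <- primes r) ((q%:R - (nu H q)%:R) / ((nu H q)%:R - 1)).

(* all sums below run over positive integers n < bnd; every summand
   vanishes for n >= RR, so these are the (finitely supported) full sums *)
Definition bnd : nat := (Num.truncn RR).+1.

Definition lambda (l d : nat) : R :=
  if (0 < d)%N && (d%:R < RR) then
    mu d * (f d / f1 d) * (sing_series / (l`!)%:R) *
    \sum_(1 <= r < bnd | (r%:R < RR / d%:R) && coprime r d)
       (mu r ^+ 2 / f1 r * (ln (RR / (r%:R * d%:R))) ^+ l)
  else 0.

Definition ystar (l r : nat) : R :=
  if (0 < r)%N && coprimeA H r && (r%:R < RR) then
    mu r * f1star r *
    \sum_(1 <= d < bnd | coprimeA H d) (lambda l (d * r) / fstar (d * r))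
  else 0.

Definition zstar (l r p : nat) : R :=
  if (0 < r)%N && coprimeA H r && (r%:R < RR / p%:R) then
    mu (p * r) * f1star r *
    \sum_(1 <= d < bnd | coprimeA H d) (lambda l (d * r * p) / fstar (d * r))
  else 0.

Definition U1 (l1 l2 p : nat) : R :=
  \sum_(1 <= d < bnd | (p %| d)%N) \sum_(1 <= e < bnd | ~~ (p %| e)%N)
    (lambda l1 d * lambda l2 e * (nu_star H (lcmn d e %/ p))%:R
      / (totient (lcmn d e %/ p))%:R).

Definition U3 (l1 l2 p : nat) : R :=
  \sum_(1 <= d < bnd | (p %| d)%N) \sum_(1 <= e < bnd | (p %| e)%N)
    (lambda l1 d * lambda l2 e * (nu_star H (lcmn d e %/ p))%:R
      / (totient (lcmn d e %/ p))%:R).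

End Weights.

(* Write g(n) = nu*_n / phi(n) = 1 / f*(n) ([gstar] below).  As 0 is in H, nu_q = nu*_q + 1 at
   every prime q, so 1/g(q) = 1 + f1*(q); since g is multiplicative on squarefree integers,
   1/g(c) = sum_{r | c} f1*(r) when (c, A) = 1, while g(n) = 0 when (n, A) > 1.  Hence
   g([d, e]) = g(d) g(e) sum_{r | (d, e)} f1*(r), and exchanging the order of summation
   diagonalises the quadratic forms U1 and U3 (Selberg's device).  Writing d = d'p, the
   inner sums over multiples of r are z* and y* up to the factor mu(pr) f1*(r) = -mu(r) f1*(r).
   In U1 the sum over e prime to p is the full sum minus the sum over multiples of p; the
   latter contributes g(p) = nu*_p / (p - 1) times a z*-sum. *)

From HB Require Import structures.
From mathcomp Require Import all_boot all_order all_algebra.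
From mathcomp Require Import all_classical all_reals all_analysis.
From mathcomp Require Import ring zify.

Import Order.TTheory GRing.Theory Num.Theory.
Set Implicit Arguments. Unset Strict Implicit. Unset Printing Implicit Defensive.

Lemma squarefreeP n :
  reflect ((0 < n)%N /\ forall q, (logn q n <= 1)%N) (squarefree n).
Proof.
apply: (iffP andP) => -[n0 sqn]; split=> //.
  move=> q; have [qn|] := boolP (q \in primes n); first by rewrite (eqP (allP sqn q qn)).
  by rewrite -logn_gt0 -leqNgt => /leq_trans->.
by apply/allP => q qn; rewrite eqn_leq sqn logn_gt0.
Qed.

Lemma squarefree_gt0 n : squarefree n -> (0 < n)%N.
Proof. by case/andP. Qed.

Lemma coprime_logn m n q : coprime m n -> (logn q m == 0) || (logn q n == 0).
Proof.
move=> cop; have [qm|nqm] := boolP (q %| m).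
  by rewrite (logn_coprime (coprime_dvdl qm cop)) orbT.
by rewrite -leqn0 leqNgt logn_gt0 mem_primes (negbTE nqm) !andbF.
Qed.

Lemma squarefreeM m n :
  squarefree (m * n) = [&& squarefree m, squarefree n & coprime m n].
Proof.
have [->|m0] := posnP m; first by [].
have [->|n0] := posnP n; first by rewrite muln0 /= andbF.
apply/squarefreeP/and3P => [[_ sqmn]|[/squarefreeP[_ sqm] /squarefreeP[_ sqn] cop]].
  have sq q : (logn q m + logn q n <= 1)%N by rewrite -lognM.
  split; [apply/squarefreeP; split=> // q; have := sq q; lia ..|].
  rewrite coprime_has_primes //; apply/hasPn => q; rewrite -!logn_gt0; have := sq q; lia.
split=> [|q]; first by rewrite muln_gt0 m0.
by rewrite lognM //; have := coprime_logn q cop; have := sqm q; have := sqn q; lia.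
Qed.

Lemma squarefree_prime q : prime q -> squarefree q.
Proof.
move=> pq; apply/squarefreeP; split=> [|x]; first exact: prime_gt0.
by rewrite logn_prime //; case: (x == q).
Qed.

Lemma perm_primesM m n : (0 < m)%N -> (0 < n)%N -> coprime m n ->
  perm_eq (primes (m * n)) (primes m ++ primes n).
Proof.
move=> m0 n0 cop; apply: uniq_perm.
- exact: primes_uniq.
- by rewrite cat_uniq !primes_uniq /= -coprime_has_primes // andbT.
- by move=> q; rewrite mem_cat primesM.
Qed.

Lemma big_primesM (R : Type) (idx : R) (op : Monoid.com_law idx) (F : nat -> R)
    m n : (0 < m)%N -> (0 < n)%N -> coprime m n ->
  \big[op/idx]_(q <- primes (m * n)) F q =
    op (\big[op/idx]_(q <- primes m) F q) (\big[op/idx]_(q <- primes n) F q).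
Proof. by move=> m0 n0 cop; rewrite (perm_big _ (perm_primesM m0 n0 cop)) big_cat. Qed.

Lemma squarefree_ind (P : nat -> Prop) :
  P 1%N ->
  (forall q m, prime q -> squarefree m -> ~~ (q %| m) -> P m -> P (q * m)%N) ->
  forall n, squarefree n -> P n.
Proof.
move=> P1 PM; elim/ltn_ind => n IH sqn; have n0 := squarefree_gt0 sqn.
have [n1|] := leqP n 1; first by have -> : n = 1%N by lia.
move=> n_gt1; have pq := pdiv_prime n_gt1; set q := pdiv n in pq.
have ltm : (n %/ q < n)%N by rewrite ltn_Pdiv // prime_gt1.
have Dn : n = (q * (n %/ q))%N by rewrite mulnC divnK ?pdiv_dvd.
move: (n %/ q) ltm Dn => m ltm Dn; rewrite Dn squarefreeM in sqn *.
case/and3P: sqn => _ sqm cop.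
by apply: PM (IH m ltm sqm) => //; rewrite -prime_coprime.
Qed.

Lemma mult_squarefree (R : comPzSemiRingType) (G : nat -> R) : G 1%N = 1%R ->
  (forall m n, (0 < m)%N -> (0 < n)%N -> coprime m n -> G (m * n)%N = (G m * G n)%R) ->
  forall n, squarefree n -> G n = (\prod_(q <- primes n) G q)%R.
Proof.
move=> G1 GM; apply: squarefree_ind => [|q m pq sqm nqm IHm]; first by rewrite G1 big_nil.
have [q0 m0] := (prime_gt0 pq, squarefree_gt0 sqm).
have cop : coprime q m by rewrite prime_coprime.
by rewrite GM // big_primesM // primes_prime // big_seq1 IHm.
Qed.

Local Open Scope ring_scope.

Lemma mu_primeM (R : pzRingType) q r : prime q -> ~~ (q %| r)%N ->
  mu (q * r) = - mu r :> R.
Proof.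
move=> pq nqr; have r0 : (0 < r)%N by case: r nqr => //; rewrite dvdn0.
have cop : coprime q r by rewrite prime_coprime.
rewrite /mu squarefreeM squarefree_prime ?cop ?andbT //.
rewrite /=; case: ifP => _; last by rewrite oppr0.
by rewrite (perm_size (perm_primesM (prime_gt0 pq) r0 cop)) primes_prime //= exprS mulN1r.
Qed.

Lemma mu_sqr (R : pzRingType) r : squarefree r -> mu r ^+ 2 = 1 :> R.
Proof. by move=> sqr; rewrite /mu sqr -exprM mulnC exprM sqrrN !expr1n. Qed.

Section NuStar.
Variable H : seq int.

Lemma Ppoly_congr (m x y : int) :
  (m %| x - y)%Z -> (m %| Ppoly H x - Ppoly H y)%Z.
Proof.
rewrite /Ppoly; elim: H => [|h s IH] mxy; first by rewrite !big_nil subrr dvdz0.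
rewrite !big_cons.
have -> : (x + h) * (\prod_(j <- s) (x + j)) - (y + h) * (\prod_(j <- s) (y + j)) =
  (x + h) * ((\prod_(j <- s) (x + j)) - (\prod_(j <- s) (y + j)))
  + (x - y) * (\prod_(j <- s) (y + j)) by ring.
by apply: rpredD; [apply/dvdz_mull/IH | apply: dvdz_mulr].
Qed.

Lemma dvdz_Ppoly_modn (m a : nat) :
  (m%:Z %| Ppoly H a%:Z)%Z = (m%:Z %| Ppoly H (a %% m)%N%:Z)%Z.
Proof.
have /Ppoly_congr : (m%:Z %| a%:Z - (a %% m)%N%:Z)%Z.
  by rewrite {1}(divn_eq a m) PoszD PoszM addrK dvdz_mull.
by move=> mXY; apply/idP/idP => mP; [rewrite -(rpredBl _ mP) | rewrite -(rpredBr _ mP)].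
Qed.

Lemma nu_starM m n : (0 < m)%N -> (0 < n)%N -> coprime m n ->
  nu_star H (m * n) = (nu_star H m * nu_star H n)%N.
Proof.
move=> m0 n0 cop.
pose Q d (a : nat) := (d%:Z %| Ppoly H a)%Z && coprime a d.
have nu_starE d : nu_star H d = (\sum_(a < d | Q d a) 1)%N.
  by rewrite /nu_star -sum1_count -(subn0 d) -/(index_iota 0 d) big_mkord subn0.
have QM a : Q (m * n)%N a = Q m (a %% m)%N && Q n (a %% n)%N.
  rewrite /Q PoszM Gauss_dvdz ?coprimezE // -dvdz_Ppoly_modn -(dvdz_Ppoly_modn n).
  by rewrite coprimeMr !coprime_modl -!andbA; congr (_ && _); rewrite andbCA.
pose crt (a : 'I_(m * n)) := (Ordinal (ltn_pmod a m0), Ordinal (ltn_pmod a n0)).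
have crt_inj : injective crt.
  move=> a b /(congr1 (fun x => (val x.1, val x.2))) [/= ab_m ab_n].
  apply: val_inj; have := chinese_remainder cop a b.
  by rewrite ab_m ab_n !eqxx !modn_small // => /eqP.
have crt_bij : bijective crt by apply: inj_card_bij => //; rewrite card_prod !card_ord.
rewrite !nu_starE big_distrlr pair_big /= (reindex crt) /=; last exact: onW_bij.
by apply: eq_bigl => a; rewrite QM.
Qed.

Lemma nu_star1 : nu_star H 1 = 1%N.
Proof. by rewrite /nu_star /= dvd1z. Qed.

Lemma nu_star0 : nu_star H 0 = 0%N.
Proof. by []. Qed.

Lemma nu_prime q : 0%Z \in H -> prime q -> nu H q = (nu_star H q).+1.
Proof.
move=> H0 pq; have q0 := prime_gt0 pq.
have P0 : Ppoly H 0 = 0 by rewrite /Ppoly (big_rem 0%Z H0) /= addr0 mul0r.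
have cop0 : coprime 0 q = false by rewrite /coprime gcd0n gtn_eqF ?prime_gt1.
have iotaE : iota 0 q = 0%N :: iota 1 q.-1 by rewrite -{1}(prednK q0).
rewrite /nu /nu_star iotaE /= P0 dvdz0 cop0 add1n add0n; congr S.
apply: eq_in_count => a; rewrite mem_iota add1n prednK // => /andP[a0 aq].
by rewrite coprime_sym prime_coprime // gtnNdvd // andbT.
Qed.

End NuStar.

Lemma lcmn_mull_coprime d e q : coprime e q -> lcmn (d * q) e = (lcmn d e * q)%N.
Proof.
move=> cop; rewrite lcmnC [lcmn d e]lcmnC /lcmn mulnA Gauss_gcdl //.
by rewrite divn_mulAC // dvdn_mull ?dvdn_gcdr.
Qed.

Section OrdinalSums.
Variable V : nmodType.
Implicit Types F : nat -> V.

Lemma sum_nat1_ord F (P : pred nat) n : F 0%N = 0 ->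
  \sum_(1 <= i < n | P i) F i = \sum_(i < n | P i) F i.
Proof.
case: n => [|n] F0; first by rewrite big_geq // big_ord0.
by rewrite -big_mkord big_ltn_cond //; case: (P 0%N); rewrite ?F0 ?add0r.
Qed.

Lemma sum_ord_multiples F B r : (0 < r)%N ->
  (forall m, (B <= m)%N -> (r %| m)%N -> F m = 0) ->
  \sum_(m < B | (r %| m)%N) F m = \sum_(d < B) F (d * r)%N.
Proof.
move=> r0 F0.
have F_mul (d : 'I_B) : F (d * r)%N = \sum_(m < B | val m == (d * r)%N) F m.
  have [lt_drB|ge_drB] := ltnP (d * r) B.
    by rewrite (big_pred1 (Ordinal lt_drB)) // => m; rewrite -val_eqE.
  rewrite big_pred0 ?F0 ?dvdn_mull // => m.
  by apply/negbTE; rewrite neq_ltn (leq_trans (ltn_ord m) ge_drB).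
rewrite (eq_bigr _ (fun d _ => F_mul d)).
under eq_bigr => d _ do rewrite big_mkcond.
rewrite exchange_big /= [LHS]big_mkcond.
apply: eq_bigr => m _; rewrite -big_mkcond; case: ifP => [rm|nrm].
  have lt_mrB : (m %/ r < B)%N by apply: leq_ltn_trans (leq_div m r) (ltn_ord m).
  rewrite (big_pred1 (Ordinal lt_mrB)) // => d.
  by rewrite /= -val_eqE /= -{1}(divnK rm) eqn_pmul2r // eq_sym.
rewrite big_pred0 // => d; apply/negbTE/eqP => Dm.
by rewrite Dm dvdn_mull in nrm.
Qed.

Lemma sum_dvdn_primeM F B q m : prime q -> ~~ (q %| m)%N -> (q * m < B)%N ->
  \sum_(r < B | (r %| q * m)%N) F r =
    \sum_(r < B | (r %| m)%N) (F r + F (r * q)%N).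
Proof.
move=> pq nqm qmB; have q0 := prime_gt0 pq; rewrite big_split /=.
have m0 : (0 < m)%N by case: m nqm {qmB} => //; rewrite dvdn0.
have -> : \sum_(r < B | (r %| m)%N) F (r * q)%N =
    \sum_(r < B | (q %| r)%N) (if (r %/ q %| m)%N then F r else 0).
  rewrite (@sum_ord_multiples (fun r => if (r %/ q %| m)%N then F r else 0)) //.
    by rewrite big_mkcond; apply: eq_bigr => r _; rewrite mulnK.
  move=> n Bn /dvdnP[r Dn]; rewrite Dn mulnK // in Bn *; case: ifP => // rm.
  suff : (r * q < B)%N by rewrite ltnNge Bn.
  by apply: leq_ltn_trans qmB; rewrite mulnC leq_pmul2l // dvdn_leq.
rewrite big_mkcond [X in X + _]big_mkcond [X in _ + X]big_mkcond -big_split.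
apply: eq_bigr => r _ /=.
have [qr|nqr] := boolP (q %| r)%N.
  have -> : (r %| m)%N = false by apply: contraNF nqm; apply: dvdn_trans.
  by rewrite add0r -{1}(divnK qr) mulnC dvdn_pmul2l.
by rewrite Gauss_dvdr ?addr0 // coprime_sym prime_coprime.
Qed.

End OrdinalSums.

Lemma coprimeA_dvd H d n : (0 < n)%N -> (d %| n)%N -> coprimeA H n -> coprimeA H d.
Proof.
move=> n0 dn /allP Hn; apply/allP => q; rewrite mem_primes => /and3P[pq d0 qd].
by apply: Hn; rewrite mem_primes pq n0 (dvdn_trans qd).
Qed.

Section SingularWeights.
Variables (R : realType) (H : seq int).
Hypothesis H0 : 0%Z \in H.

Definition gstar (n : nat) : R := (nu_star H n)%:R / (totient n)%:R.

Lemma fstarV n : (fstar R H n)^-1 = gstar n.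
Proof. by rewrite invf_div. Qed.

Lemma gstar0 : gstar 0 = 0.
Proof. by rewrite /gstar nu_star0 mul0r. Qed.

Lemma gstarM m n : (0 < m)%N -> (0 < n)%N -> coprime m n ->
  gstar (m * n) = gstar m * gstar n.
Proof. by move=> m0 n0 cop; rewrite /gstar nu_starM // totient_coprime // !natrM mulf_div. Qed.

Lemma gstar_prod n : squarefree n -> gstar n = \prod_(q <- primes n) gstar q.
Proof. by apply: mult_squarefree; [rewrite /gstar nu_star1 divr1 | exact: gstarM]. Qed.

Lemma gstar_eq0 n : squarefree n -> ~~ coprimeA H n -> gstar n = 0.
Proof.
rewrite /coprimeA -has_predC => sqn /hasP[q qn /negPn/eqP nu_q].
by rewrite gstar_prod // (big_rem q qn) /= /gstar nu_q !mul0r.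
Qed.

Lemma gstar_neq0 n : squarefree n -> coprimeA H n -> gstar n != 0.
Proof.
move=> sqn /allP Hn; rewrite gstar_prod // prodf_seq_neq0; apply/allP => q qn /=.
have pq : prime q by move: qn; rewrite mem_primes => /andP[].
rewrite /gstar totient_prime // mulf_neq0 ?invr_neq0 // pnatr_eq0 ?Hn //.
by rewrite -lt0n -ltnS prednK ?prime_gt0 ?prime_gt1.
Qed.

Lemma f1star_prime q : prime q ->
  f1star R H q = (q%:R - (nu H q)%:R) / ((nu H q)%:R - 1).
Proof. by move=> pq; rewrite /f1star primes_prime // big_seq1. Qed.

Lemma f1starM m n : (0 < m)%N -> (0 < n)%N -> coprime m n ->
  f1star R H (m * n) = f1star R H m * f1star R H n.
Proof. exact: big_primesM. Qed.

Lemma f1star_neq0 r : admissible H -> coprimeA H r -> f1star R H r != 0.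
Proof.
move=> adm /allP Hr; rewrite prodf_seq_neq0; apply/allP => q qr /=.
have pq : prime q by move: qr; rewrite mem_primes => /andP[].
have nu_q := nu_prime H0 pq.
rewrite mulf_neq0 ?invr_neq0 //.
  by rewrite subr_eq0 eqr_nat; apply: contraTneq (adm q pq) => <-; rewrite ltnn.
by rewrite nu_q -natr1 addrK pnatr_eq0 Hr.
Qed.

Lemma gstar_prime q : prime q -> gstar q = (nu_star H q)%:R / (q%:R - 1).
Proof.
move=> pq; rewrite /gstar totient_prime //; congr (_ / _).
by rewrite -{2}(prednK (prime_gt0 pq)) -natr1 addrK.
Qed.

Lemma gstarV_prime q : prime q -> nu_star H q != 0%N ->
  (gstar q)^-1 = 1 + f1star R H q.
Proof.
move=> pq nu_q; rewrite gstar_prime // f1star_prime // nu_prime // invf_div -natr1.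
by field; rewrite addrK pnatr_eq0.
Qed.

Lemma sum_dvdn_f1star B c : squarefree c -> coprimeA H c -> (c < B)%N ->
  \sum_(r < B | (r %| c)%N) f1star R H r = (gstar c)^-1.
Proof.
move: c; apply: squarefree_ind => [_ B1|q m pq sqm nqm IHm Hqm qmB].
  rewrite (big_pred1 (Ordinal B1)) => [|r]; last by rewrite /= dvdn1 -val_eqE.
  by rewrite /f1star /gstar nu_star1 big_nil divr1 invr1.
have [q0 m0] := (prime_gt0 pq, squarefree_gt0 sqm).
have Hm : coprimeA H m by apply: coprimeA_dvd Hqm; rewrite ?muln_gt0 ?q0 ?dvdn_mull.
have nu_q : nu_star H q != 0%N.
  by apply: (allP Hqm); rewrite mem_primes pq muln_gt0 q0 m0 dvdn_mulr.
have mB : (m < B)%N by apply: leq_ltn_trans qmB; rewrite leq_pmull.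
rewrite sum_dvdn_primeM //.
under eq_bigr => r rm.
  rewrite f1starM ?(dvdn_gt0 m0 rm) ?prime_gt0 //; last first.
    by rewrite coprime_sym prime_coprime //; apply: contra nqm => /dvdn_trans->.
  rewrite -{1}[f1star R H r]mulr1 -mulrDr.
  over.
by rewrite -mulr_suml gstarM ?prime_coprime // invfM gstarV_prime // IHm // mulrC.
Qed.

Lemma gstar_lcm B d e : squarefree d -> squarefree e -> (gcdn d e < B)%N ->
  gstar (lcmn d e) =
    gstar d * gstar e * \sum_(r < B | (r %| gcdn d e)%N) f1star R H r.
Proof.
move=> sqd sqe cB; have [d0 e0] := (squarefree_gt0 sqd, squarefree_gt0 sqe).
set c := gcdn d e in cB *; set e' := (e %/ c)%N.
have De : e = (c * e')%N by rewrite mulnC divnK ?dvdn_gcdr.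
have /and3P[sqc sqe' cop_ce'] : [&& squarefree c, squarefree e' & coprime c e'].
  by rewrite -squarefreeM -De.
have e'0 := squarefree_gt0 sqe'.
have cop_de' : coprime d e'.
  rewrite /coprime -dvdn1 -(eqP cop_ce') dvdn_gcd dvdn_gcdr andbT dvdn_gcd dvdn_gcdl /=.
  by apply: dvdn_trans (dvdn_gcdr d e') _; rewrite {1}De dvdn_mull.
have -> : lcmn d e = (d * e')%N by rewrite /lcmn muln_divA ?dvdn_gcdr.
rewrite gstarM // De gstarM ?squarefree_gt0 //.
have [Hc|nHc] := boolP (coprimeA H c).
  by rewrite sum_dvdn_f1star //; field; rewrite gstar_neq0.
rewrite [gstar d]gstar_eq0 ?mul0r //; apply: contra nHc; apply: coprimeA_dvd d0 _.
exact: dvdn_gcdl.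
Qed.

Lemma sum_lcm_diagonal B (F1 F2 : nat -> R) (P : pred nat) :
  (forall n, F1 n != 0 -> squarefree n /\ (n < B)%N) ->
  (forall n, F2 n != 0 -> squarefree n /\ (n < B)%N) ->
  \sum_(d < B) \sum_(e < B | P e) F1 d * F2 e * gstar (lcmn d e) =
  \sum_(r < B) f1star R H r * (\sum_(d < B | (r %| d)%N) F1 d * gstar d)
                           * (\sum_(e < B | P e && (r %| e)%N) F2 e * gstar e).
Proof.
move=> F1_supp F2_supp.
pose T (d e r : nat) :=
  if (r %| d)%N && P e && (r %| e)%N
  then f1star R H r * (F1 d * gstar d) * (F2 e * gstar e) else 0.
have lcm_expand (d e : 'I_B) : P e ->
    F1 d * F2 e * gstar (lcmn d e) = \sum_(r < B) T d e r.
  rewrite /T => Pe; have [F1d|/F1_supp[sqd dB]] := eqVneq (F1 d) 0.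
    by rewrite F1d !mul0r big1 // => r _; case: ifP => _; rewrite ?(mulr0, mul0r).
  have [F2e|/F2_supp[sqe eB]] := eqVneq (F2 e) 0.
    by rewrite F2e mulr0 mul0r big1 // => r _; case: ifP => _; rewrite ?(mulr0, mul0r).
  rewrite (@gstar_lcm B) //; last first.
    exact: leq_ltn_trans (dvdn_leq (squarefree_gt0 sqd) (dvdn_gcdl _ _)) dB.
  rewrite !mulr_sumr big_mkcond; apply: eq_bigr => r _; rewrite dvdn_gcd Pe andbT.
  by case: ifP => _; rewrite ?mulr0 //; ring.
transitivity (\sum_(d < B) \sum_(e < B) \sum_(r < B) T d e r).
  apply: eq_bigr => d _; rewrite big_mkcond; apply: eq_bigr => e _.
  case: ifPn => [/lcm_expand //|nPe]; rewrite big1 // => r _.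
  by rewrite /T (negbTE nPe) andbF.
under eq_bigr => d _ do rewrite exchange_big /=.
rewrite exchange_big /=; apply: eq_bigr => r _.
rewrite [f1star _ _ _ * _]mulr_sumr mulr_suml [RHS]big_mkcond.
apply: eq_bigr => d _ /=; rewrite /T; case: (r %| d)%N => /=; last by rewrite big1.
rewrite mulr_sumr [RHS]big_mkcond; apply: eq_bigr => e _ /=.
by case: ifP; rewrite ?mulrA.
Qed.

Lemma sum_coprimeA_div_fstar B r (F : nat -> R) :
  (forall d, F d != 0 -> squarefree (d * r)) ->
  \sum_(1 <= d < B | coprimeA H d) F d / fstar R H (d * r) =
    \sum_(d < B) F d * gstar (d * r).
Proof.
move=> F_supp; rewrite sum_nat1_ord ?fstarV ?mul0n ?gstar0 ?mulr0 // big_mkcond.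
apply: eq_bigr => d _; rewrite fstarV; case: ifPn => // nHd.
have [->|/F_supp sqdr] := eqVneq (F d) 0; first by rewrite mul0r.
rewrite gstar_eq0 ?mulr0 //; apply: contra nHd.
by apply: coprimeA_dvd; rewrite ?squarefree_gt0 ?dvdn_mulr.
Qed.

End SingularWeights.

Section Diagonalization.
Variables (R : realType) (H : seq int) (RR : R) (p : nat).
Hypotheses (H0 : 0%Z \in H) (adm : admissible H) (pp : prime p).

Local Notation B := (bnd RR).
Local Notation lam l := (lambda H RR l).
Local Notation g := (gstar R H).

Lemma lambda0 l : lam l 0 = 0.
Proof. by []. Qed.

Lemma lambda_supp l n : lam l n != 0 -> [/\ squarefree n, n%:R < RR & (n < B)%N].
Proof.
rewrite /lambda /mu; case: ifP => [/andP[_ nRR]|]; last by rewrite eqxx.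
case: ifP => [sqn _|]; last by rewrite !mul0r eqxx.
have RR0 : 0 <= RR by apply: le_trans (ltW nRR).
by split; rewrite // ltnS truncn_ge_nat // ltW.
Qed.

Lemma lambda_ge_bnd l n : (B <= n)%N -> lam l n = 0.
Proof. by move=> Bn; apply/eqP; apply: contraTT Bn => /lambda_supp[_ _]; rewrite -ltnNge. Qed.

Lemma lambda_dvd_lt l n m : lam l n != 0 -> (m %| n)%N -> m%:R < RR.
Proof.
case/lambda_supp => /squarefree_gt0 n0 nRR _ mn.
by apply: le_lt_trans nRR; rewrite ler_nat dvdn_leq.
Qed.

Lemma lambda_mulr_supp l n m : lam l (n * m) != 0 -> squarefree n /\ (n < B)%N.
Proof.
case/lambda_supp; rewrite squarefreeM => /and3P[sqn /squarefree_gt0 m0 _] _ nmB.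
by split=> //; apply: leq_ltn_trans nmB; rewrite leq_pmulr.
Qed.

Definition zsum l r := \sum_(d < B) lam l (d * r * p) * g (d * r).
Definition ysum l r := \sum_(d < B) lam l (d * r) * g (d * r).

Lemma zsum_eq0 l r : ~~ [&& coprimeA H r, coprime r p & squarefree r] -> zsum l r = 0.
Proof.
move=> nP; apply: big1 => d _.
have [->|] := eqVneq (lam l (d * r * p)) 0; first by rewrite mul0r.
case/lambda_supp; rewrite !squarefreeM coprimeMl => /and4P[/and3P[sqd sqr cdr] _ _ crp] _ _.
have sqdr : squarefree (d * r) by rewrite squarefreeM sqd sqr.
rewrite gstar_eq0 ?mulr0 //; apply: contra nP => Hdr; rewrite crp sqr !andbT.
by apply: (coprimeA_dvd _ _ Hdr); rewrite ?squarefree_gt0 ?dvdn_mull.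
Qed.

Lemma zsum_supp l r : zsum l r != 0 -> [&& coprimeA H r, coprime r p & squarefree r].
Proof. by apply: contraNT => /zsum_eq0->; rewrite eqxx. Qed.

Lemma zstarE l r : (0 < r)%N -> coprimeA H r ->
  zstar H RR l r p = mu (p * r) * f1star R H r * zsum l r.
Proof.
move=> r0 Hr; rewrite /zstar r0 Hr /=.
rewrite (@sum_coprimeA_div_fstar _ _ _ r (fun d => lam l (d * r * p))); last first.
  by move=> d /lambda_supp[]; rewrite squarefreeM => /andP[].
case: ifPn => // rRp; suff -> : zsum l r = 0 by rewrite mulr0.
apply: big1 => d _; have [->|/lambda_dvd_lt rpRR] := eqVneq (lam l (d * r * p)) 0.
  by rewrite mul0r.
move: rRp; rewrite ltr_pdivlMr ?ltr0n ?prime_gt0 // -natrM (rpRR (r * p)%N) //.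
by rewrite -mulnA dvdn_mull.
Qed.

Lemma ystarE l r : (0 < r)%N -> coprimeA H r ->
  ystar H RR l r = mu r * f1star R H r * ysum l r.
Proof.
move=> r0 Hr; rewrite /ystar r0 Hr /=.
rewrite (@sum_coprimeA_div_fstar _ _ _ r (fun d => lam l (d * r))); last first.
  by move=> d /lambda_supp[].
case: ifPn => // rRR; suff -> : ysum l r = 0 by rewrite mulr0.
apply: big1 => d _; have [->|/lambda_dvd_lt rRR'] := eqVneq (lam l (d * r)) 0.
  by rewrite mul0r.
by rewrite rRR' ?dvdn_mull in rRR.
Qed.

Lemma zsumE l r : \sum_(d < B | (r %| d)%N) lam l (d * p) * g d = zsum l r.
Proof.
have [->|r0] := posnP r.
  rewrite zsum_eq0 ?andbF //; apply: big1 => d; rewrite dvd0n => /eqP->.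
  by rewrite lambda0 mul0r.
rewrite (@sum_ord_multiples _ (fun d => lam l (d * p) * g d)) // => m mB _.
by rewrite lambda_ge_bnd ?mul0r // (leq_trans mB) ?leq_pmulr ?prime_gt0.
Qed.

Lemma ysumE l r : (0 < r)%N -> \sum_(e < B | (r %| e)%N) lam l e * g e = ysum l r.
Proof.
move=> r0; rewrite (@sum_ord_multiples _ (fun e => lam l e * g e)) // => m mB _.
by rewrite lambda_ge_bnd ?mul0r.
Qed.

Lemma sum_ndvdn_lambda l r : (0 < r)%N -> coprime r p ->
  \sum_(e < B | ~~ (p %| e)%N && (r %| e)%N) lam l e * g e = ysum l r - g p * zsum l r.
Proof.
move=> r0 crp; have p0 := prime_gt0 pp.
have zsum_p : \sum_(e < B | (p %| e)%N && (r %| e)%N) lam l e * g e = g p * zsum l r.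
  pose G e := if (r %| e)%N then lam l e * g e else 0.
  rewrite big_mkcondr (@sum_ord_multiples _ G) /G //; last first.
    by move=> m mB _; rewrite lambda_ge_bnd ?mul0r ?if_same.
  rewrite -zsumE mulr_sumr [RHS]big_mkcond; apply: eq_bigr => d _ /=.
  rewrite Gauss_dvdl //; case: ifP => // _.
  have [->|/lambda_supp[]] := eqVneq (lam l (d * p)) 0; first by rewrite !(mul0r, mulr0).
  rewrite squarefreeM => /and3P[/squarefree_gt0 d0 _ cdp] _ _.
  by rewrite gstarM // [g d * _]mulrC mulrCA.
apply/eqP; rewrite eq_sym subr_eq -ysumE // -zsum_p.
rewrite (bigID (fun e : 'I_B => ~~ (p %| e)%N)) /=.
by apply/eqP; congr (_ + _); apply: eq_bigl => e; rewrite andbC ?negbK.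
Qed.

Lemma sum_zstar_weighted l (X Y : nat -> R) :
  (forall r, (0 < r)%N -> coprimeA H r -> coprime r p ->
     X r = mu r * f1star R H r * Y r) ->
  \sum_(1 <= r < B | coprimeA H r && coprime r p)
     zstar H RR l r p * X r / f1star R H r =
    - \sum_(r < B) f1star R H r * zsum l r * Y r.
Proof.
move=> XE; rewrite sum_nat1_ord ?mul0r // -sumrN big_mkcond; apply: eq_bigr => r _ /=.
case: ifPn => [/andP[Hr crp]|nP]; last first.
  by rewrite zsum_eq0 ?(mulr0, mul0r, oppr0) //; apply: contra nP => /and3P[-> ->].
have r0 : (0 < r)%N.
  by rewrite lt0n; apply: contraTneq crp => ->; rewrite /coprime gcd0n gtn_eqF ?prime_gt1.
rewrite zstarE // XE // mu_primeM -?prime_coprime 1?coprime_sym //.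
have [sqr|nsqr] := boolP (squarefree r); last first.
  by rewrite zsum_eq0 ?Hr ?crp // !(mulr0, mul0r, oppr0).
have f1_neq0 := f1star_neq0 R H0 adm Hr.
transitivity (- (mu r ^+ 2 * (f1star R H r / f1star R H r))
                * (f1star R H r * zsum l r * Y r)); first by ring.
by rewrite mu_sqr // divff // mulr1 mulN1r.
Qed.

Lemma sum_zstar_ystar l1 l2 :
  \sum_(1 <= r < B | coprimeA H r && coprime r p)
     zstar H RR l1 r p * ystar H RR l2 r / f1star R H r =
    - \sum_(r < B) f1star R H r * zsum l1 r * ysum l2 r.
Proof. by apply: sum_zstar_weighted => r r0 Hr _; rewrite ystarE. Qed.

Lemma sum_zstar_zstar l1 l2 :
  \sum_(1 <= r < B | coprimeA H r && coprime r p)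
     zstar H RR l1 r p * zstar H RR l2 r p / f1star R H r =
    \sum_(r < B) f1star R H r * zsum l1 r * zsum l2 r.
Proof.
rewrite (@sum_zstar_weighted l1 _ (fun r => - zsum l2 r)) => [|r r0 Hr crp].
  by rewrite -sumrN; apply: eq_bigr => r _; rewrite mulrN opprK.
rewrite zstarE // mu_primeM //; first by rewrite mulrN !mulNr.
by rewrite -prime_coprime // coprime_sym.
Qed.

Lemma sum_lambda_lcm_divp (P Q : pred nat) l1 l2 :
  \sum_(1 <= d < B | P d) \sum_(1 <= e < B | Q e)
     (lam l1 d * lam l2 e * (nu_star H (lcmn d e %/ p))%:R
        / (totient (lcmn d e %/ p))%:R) =
  \sum_(d < B | P d) \sum_(e < B | Q e) lam l1 d * lam l2 e * g (lcmn d e %/ p).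
Proof.
rewrite sum_nat1_ord; last by rewrite big1 // => e _; rewrite lambda0 !mul0r.
apply: eq_bigr => d _; rewrite sum_nat1_ord; last by rewrite lambda0 mulr0 !mul0r.
by apply: eq_bigr => e _; rewrite mulrA.
Qed.

Lemma U1_diagonal l1 l2 : U1 H RR l1 l2 p =
  \sum_(r < B) f1star R H r * zsum l1 r * (ysum l2 r - g p * zsum l2 r).
Proof.
have p0 := prime_gt0 pp.
rewrite /U1 sum_lambda_lcm_divp.
pose Gd d := \sum_(e < B | ~~ (p %| e)%N) lam l1 d * lam l2 e * g (lcmn d e %/ p).
rewrite (@sum_ord_multiples _ Gd) /Gd //; last first.
  by move=> m mB _; apply: big1 => e _; rewrite lambda_ge_bnd ?mul0r.
have lcm_divp d e : ~~ (p %| e)%N -> (lcmn (d * p) e %/ p)%N = lcmn d e.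
  by move=> pe; rewrite lcmn_mull_coprime ?mulnK // coprime_sym prime_coprime.
under eq_bigr => d _ do under eq_bigr => e pe do rewrite lcm_divp //.
have := @sum_lcm_diagonal R H H0 B (fun d => lam l1 (d * p)) (lam l2) (fun e => ~~ (p %| e)%N).
move=> /= ->; [|by move=> n /lambda_mulr_supp|by move=> n /lambda_supp[]].
apply: eq_bigr => r _; rewrite zsumE.
have [->|/zsum_supp/and3P[_ crp /squarefree_gt0 r0]] := eqVneq (zsum l1 r) 0.
  by rewrite !(mulr0, mul0r).
by rewrite sum_ndvdn_lambda.
Qed.

Lemma U3_diagonal l1 l2 : U3 H RR l1 l2 p =
  \sum_(r < B) f1star R H r * zsum l1 r * zsum l2 r.
Proof.
have p0 := prime_gt0 pp.
rewrite /U3 sum_lambda_lcm_divp.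
pose Gd d := \sum_(e < B | (p %| e)%N) lam l1 d * lam l2 e * g (lcmn d e %/ p).
rewrite (@sum_ord_multiples _ Gd) /Gd //; last first.
  by move=> m mB _; apply: big1 => e _; rewrite lambda_ge_bnd ?mul0r.
under eq_bigr => d _.
  pose Ge e := lam l1 (d * p) * lam l2 e * g (lcmn (d * p) e %/ p).
  rewrite (@sum_ord_multiples _ Ge) /Ge //; last first.
    by move=> m mB _; rewrite [lam l2 m]lambda_ge_bnd ?mulr0 ?mul0r.
  under eq_bigr => e _ do rewrite -muln_lcml mulnK //.
  over.
have := @sum_lcm_diagonal R H H0 B (fun d => lam l1 (d * p)) (fun e => lam l2 (e * p)) xpredT.
move=> /= ->; [|by move=> n /lambda_mulr_supp..].
by apply: eq_bigr => r _; rewrite !zsumE.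
Qed.

End Diagonalization.

Theorem lemma13 (R : realType) (H : seq int) (RR : R) (l1 l2 p : nat) :
  uniq H -> (2 <= size H)%N -> 0%Z \in H -> admissible H ->
  (l1 <= size H)%N -> (l2 <= size H)%N ->
  1 < RR -> prime p -> p%:R < RR ->
  U1 H RR l1 l2 p =
    - (\sum_(1 <= r < bnd RR | coprimeA H r && coprime r p)
          (zstar H RR l1 r p * ystar H RR l2 r / f1star R H r))
    - (nu_star H p)%:R / (p%:R - 1) *
      (\sum_(1 <= r < bnd RR | coprimeA H r && coprime r p)
          (zstar H RR l1 r p * zstar H RR l2 r p / f1star R H r))
  /\
  U3 H RR l1 l2 p =
    \sum_(1 <= r < bnd RR | coprimeA H r && coprime r p)
       (zstar H RR l1 r p * zstar H RR l2 r p / f1star R H r).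
Proof.
move=> _ _ H0 adm _ _ _ pp _.
rewrite U1_diagonal // U3_diagonal // sum_zstar_ystar // sum_zstar_zstar //.
rewrite -gstar_prime // opprK mulr_sumr -sumrB; split=> //.
by apply: eq_bigr => r _; ring.
Qed.
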